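(* Let $\vec a=(a_1,\dots,a_n),\vec b=(b_1,\dots,b_n)\in\mathbb{R}^n$ and $\delta\ge0$ with $\|\mathrm{push}_{\mathcal L_{\vec b}}(\vec a)-\vec b\|_\infty\le\delta$. Then $\min_{i\in[n]}|a_i-b_i|\le\delta$. In particular, if $\vec a\in\mathrm{Im}\,\mathcal G$ for a grid $\mathcal G$, then $\inf_{\vec g\in\mathrm{Grid}_{\mathcal G}}\|\vec b-\vec g\|_\infty\le\delta$.
   Context: $\mathcal L_{\vec b}$ is the line $\{\vec b+t\vec1:t\in\mathbb{R}\}$, $\vec1=(1,\dots,1)$. $\mathrm{push}_{\mathcal L}(\vec p)=\min\{\vec q\in\mathcal L:\vec q\ge\vec p\}$ in the coordinatewise order. A grid is $\mathcal G=\prod_i\mathcal G^i:\prod_i[k_i]\to\mathbb{R}^n$ with $\mathcal G^i:[k_i]\to\mathbb{R}$, and $\mathrm{Grid}_{\mathcal G}=\{\vec x\in\mathbb{R}^n:x_j\in\mathrm{Im}\,\mathcal G^j\text{ for some }j\}$. *)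

From HB Require Import structures.
From mathcomp Require Import all_boot all_order all_algebra.
From mathcomp Require Import boolp classical_sets reals.
Set Implicit Arguments. Unset Strict Implicit. Unset Printing Implicit Defensive.
Import Order.TTheory GRing.Theory Num.Theory.
Local Open Scope ring_scope.
Local Open Scope classical_set_scope.

Section Defs.
Variables (R : realType) (n : nat).

Definition line (b : 'I_n -> R) : set ('I_n -> R) :=
  [set q | exists t : R, q = (fun i => b i + t)].

Definition leV (p q : 'I_n -> R) : Prop := forall i, p i <= q i.

Definition is_push (L : set ('I_n -> R)) (p q : 'I_n -> R) : Prop :=
  [/\ L q, leV p q & forall q', L q' -> leV p q' -> leV q q'].

Definition linf (x : 'I_n -> R) : R := \big[Num.max/0]_(i < n) `|x i|.

Definition grid_image (k : 'I_n -> nat) (G : forall i : 'I_n, 'I_(k i) -> R)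
  : set ('I_n -> R) := [set x | forall i, exists j, x i = G i j].

Definition Grid (k : 'I_n -> nat) (G : forall i : 'I_n, 'I_(k i) -> R)
  : set ('I_n -> R) := [set x | exists i, exists j, x i = G i j].

End Defs.

From HB Require Import structures.
From mathcomp Require Import all_boot all_order all_algebra.
From mathcomp Require Import boolp classical_sets reals.
Set Implicit Arguments. Unset Strict Implicit. Unset Printing Implicit Defensive.
Import Order.TTheory GRing.Theory Num.Theory.
Local Open Scope ring_scope.
Local Open Scope classical_set_scope.

(* The push of a onto L_b is b + t 1 with t = max_i (a_i - b_i), so it agrees
   with a at a coordinate j attaining this maximum.  Hence
   |a_j - b_j| = |push_j - b_j| <= delta, and when a lies on the grid the push
   itself lies in Grid_G (through coordinate j), at distance <= delta from b. *)

Section LinfNorm.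
Variables (R : realType) (n : nat).
Implicit Types x y : 'I_n -> R.

Lemma linf_ge0 x : 0 <= linf x.
Proof. by rewrite /linf; elim/big_ind: _ => // u v u0 v0; rewrite le_max u0. Qed.

Lemma normr_le_linf x i : `|x i| <= linf x.
Proof. by rewrite /linf (bigD1 i) //= le_max lexx. Qed.

Lemma linf_distrC x y : linf (fun i => x i - y i) = linf (fun i => y i - x i).
Proof. by apply: eq_bigr => i _; rewrite distrC. Qed.

End LinfNorm.

Lemma inf_image_ge0_le (R : realType) (T : Type) (A : set T) (f : T -> R) x :
  (forall y, A y -> 0 <= f y) -> A x -> inf [set f y | y in A] <= f x.
Proof.
move=> f_ge0 Ax; apply: ge_inf; last by exists x.
by exists 0 => _ [y Ay <-]; exact: f_ge0.
Qed.

Lemma push_line_coord_eq (R : realType) (n : nat) (a b pa : 'I_n -> R) :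
  (0 < n)%N -> is_push (line b) a pa -> exists j, pa j = a j.
Proof.
move=> n_gt0 [_ le_a_pa pa_min].
have [j _ jmax] := @arg_maxP _ R _ (Ordinal n_gt0) xpredT (fun i => a i - b i) isT.
pose q i := b i + (a j - b j).
have Lq : line b q by exists (a j - b j).
have le_a_q : leV a q by move=> i; rewrite /q -lerBlDl; exact: jmax.
exists j; apply/eqP; rewrite eq_le le_a_pa andbT.
by have := pa_min q Lq le_a_q j; rewrite /q addrC subrK.
Qed.

Theorem mainTheorem14 (R : realType) (n : nat) (hn : (0 < n)%N)
  (a b : 'I_n -> R) (delta : R) (hdelta : 0 <= delta) (pa : 'I_n -> R) :
  is_push (line b) a pa ->
  linf (fun i => pa i - b i) <= delta ->
  inf [set `|a i - b i| | i in [set: 'I_n]] <= delta /\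
  (forall (k : 'I_n -> nat) (G : forall i : 'I_n, 'I_(k i) -> R),
     grid_image G a ->
     inf [set linf (fun i => b i - g i) | g in Grid G] <= delta).
Proof.
move=> push_pa pa_near_b.
have [j pa_j] := push_line_coord_eq hn push_pa.
split.
  apply: le_trans (pa_near_b); apply: le_trans (normr_le_linf _ j).
  by rewrite pa_j; apply: inf_image_ge0_le.
move=> k G a_on_grid.
have Grid_pa : Grid G pa by have [l a_j] := a_on_grid j; exists j, l; rewrite pa_j.
apply: le_trans (pa_near_b); rewrite linf_distrC.
by apply: inf_image_ge0_le => // g _; exact: linf_ge0.
Qed.
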